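(* Let $(Q,\rightarrow)$ be a finite transition system and $\mathscr{R}$ a preorder on $Q$. Among all equivalence relations $\mathscr{P}$ on $Q$ with $\mathscr{P}\subseteq\mathscr{R}$ and $\mathscr{P}\circ\rightarrow^{-1}\subseteq\rightarrow^{-1}\circ\mathscr{R}$ (the $\mathscr{R}$-stable equivalence relations), there is a coarsest one, i.e. one containing all the others.
   Context: For relations on $Q$: $\mathscr{R}^{-1}=\{(y,x)\mid(x,y)\in\mathscr{R}\}$, $\mathscr{R}(X)=\{q'\mid\exists q\in X,\ q\,\mathscr{R}\,q'\}$, and $\mathscr{S}\circ\mathscr{R}=\{(x,y)\mid y\in\mathscr{S}(\mathscr{R}(x))\}$. A preorder is a reflexive transitive relation. A relation is coarser than another if it contains it. *)

From mathcomp Require Import all_boot.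
Set Implicit Arguments. Unset Strict Implicit. Unset Printing Implicit Defensive.

Definition relation (Q : Type) := Q -> Q -> Prop.

Definition rinv (Q : Type) (R : relation Q) : relation Q := fun y x => R x y.

Definition rcomp (Q : Type) (S R : relation Q) : relation Q :=
  fun x y => exists z, R x z /\ S z y.

Definition rsub (Q : Type) (R S : relation Q) : Prop := forall x y, R x y -> S x y.

Definition is_preorder (Q : Type) (R : relation Q) : Prop :=
  (forall x, R x x) /\ (forall x y z, R x y -> R y z -> R x z).

Definition is_equivalence (Q : Type) (P : relation Q) : Prop :=
  (forall x, P x x) /\ (forall x y, P x y -> P y x) /\
  (forall x y z, P x y -> P y z -> P x z).

Definition R_stable (Q : Type) (trans R P : relation Q) : Prop :=
  rsub P R /\ rsub (rcomp P (rinv trans)) (rcomp (rinv trans) R).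

From mathcomp Require Import all_boot.
From Stdlib Require Import Relation_Operators.

Set Implicit Arguments.
Unset Strict Implicit.
Unset Printing Implicit Defensive.

(* R-stability is preserved by arbitrary unions, and, since R is transitive,
   also by transitive closure: along a chain of P-steps a transition is
   matched step by step, and the resulting chain of R-steps collapses.
   Hence the transitive closure of the union of all R-stable equivalences
   is again an R-stable equivalence (the identity is one of them because R
   is reflexive), and it contains every other one. *)

Section StableEquivalences.

Variables (Q : Type) (trans R : relation Q).

Lemma is_equivalence_eq : is_equivalence (@eq Q).
Proof. by split=> [//|]; split=> [x y ->|x y z -> ->]. Qed.

Lemma R_stable_eq : (forall x, R x x) -> R_stable trans R (@eq Q).
Proof.
move=> R_refl; split=> [x y <- //|x y [z [zx <-]]].
by exists x; split.
Qed.

Lemma is_equivalence_clos_trans (P : relation Q) :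
  (forall x, P x x) -> (forall x y, P x y -> P y x) ->
  is_equivalence (clos_trans Q P).
Proof.
move=> P_refl P_sym; split; first by move=> x; apply: t_step.
split; last exact: t_trans.
move=> x y; elim=> [a b /P_sym ba|a b c _ ba _ cb]; first exact: t_step.
exact: t_trans cb ba.
Qed.

Hypothesis R_trans : forall x y z, R x y -> R y z -> R x z.

Lemma R_stable_clos_trans (P : relation Q) :
  R_stable trans R P -> R_stable trans R (clos_trans Q P).
Proof.
move=> [PR P_sim]; split.
  by move=> x y; elim=> [a b /PR //|a b c _ Rab _ Rbc]; apply: R_trans Rab Rbc.
move=> x y [z [zx Pzy]]; elim: Pzy x zx => [a b Pab|a b c _ IHab _ IHbc] x ax.
  by apply: P_sim; exists a.
have [w [Rxw bw]] := IHab x ax.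
have [v [Rwv cv]] := IHbc w bw.
by exists v; split; first exact: R_trans Rxw Rwv.
Qed.

Definition stable_union : relation Q :=
  fun x y => exists P, is_equivalence P /\ R_stable trans R P /\ P x y.

Lemma R_stable_union : R_stable trans R stable_union.
Proof.
split=> [x y [P [_ [[PR _] Pxy]]]|x y [z [zx [P [_ [[_ P_sim] Pzy]]]]]].
  exact: PR Pxy.
by apply: P_sim; exists z.
Qed.

Lemma stable_union_sym x y : stable_union x y -> stable_union y x.
Proof.
move=> [P [P_equiv [P_stable Pxy]]]; exists P; split=> //; split=> //.
by case: P_equiv => _ [P_sym _]; apply: P_sym.
Qed.

Lemma stable_union_refl : (forall x, R x x) -> forall x, stable_union x x.
Proof.
move=> R_refl x; exists eq; split; first exact: is_equivalence_eq.
by split; first exact: R_stable_eq.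
Qed.

End StableEquivalences.

Theorem proposition2 (Q : finType) (trans : relation Q) (R : relation Q) :
  is_preorder R ->
  exists P : relation Q,
    is_equivalence P /\ R_stable trans R P /\
    (forall P' : relation Q,
        is_equivalence P' -> R_stable trans R P' -> rsub P' P).
Proof.
move=> [R_refl R_trans].
exists (clos_trans Q (stable_union trans R)); split; [|split].
- apply: is_equivalence_clos_trans; first exact: stable_union_refl.
  exact: stable_union_sym.
- exact/R_stable_clos_trans/R_stable_union.
- by move=> P' P'_equiv P'_stable x y P'xy; apply: t_step; exists P'.
Qed.
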